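(* Let $k\in\mathbb{Z}^+$ with $k>1$ and $\pi\in S_k$ be fixed, and let $A_\pi$ be the $k\times k$ permutation matrix of $\pi$. There is a constant $C=C(\pi)$ such that for all integers $m,n\ge 0$, the number of $n\times n$ $0$-$1$ matrices containing at most $m$ copies of $A_\pi$ is at most \[\exp\left(C\left(n+\sqrt[2k-1]{m\,n^{2k-2}}\right)\right).\]
   Context: A copy of $A_\pi$ in an $n\times n$ $0$-$1$ matrix $M$ is a choice of row indices $x_1<\dots<x_k$ and column indices $y_1<\dots<y_k$ with $M_{x_i,y_{\pi(i)}}=1$ for all $i$. *)

From HB Require Import structures.
From mathcomp Require Import all_boot all_order all_algebra all_fingroup.
From mathcomp Require Import all_classical all_reals all_analysis.
Set Implicit Arguments. Unset Strict Implicit. Unset Printing Implicit Defensive.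

Definition incr_idx (k n : nat) (x : {ffun 'I_k -> 'I_n}) : bool :=
  [forall i : 'I_k, forall j : 'I_k, (i < j)%N ==> (x i < x j)%N].

Definition is_copy (k n : nat) (pi : 'S_k) (M : 'M[bool]_n)
    (xy : {ffun 'I_k -> 'I_n} * {ffun 'I_k -> 'I_n}) : bool :=
  [&& incr_idx xy.1, incr_idx xy.2 & [forall i : 'I_k, M (xy.1 i) (xy.2 (pi i))]].

Definition copies (k n : nat) (pi : 'S_k) (M : 'M[bool]_n) : nat :=
  #|[set xy | is_copy pi M xy]|.

(* A pi-free set of points in an r x r grid has O(r) points (Marcus-Tardos).
   Deleting one point of each copy, any set S of points in an r x r subgrid
   satisfies |S| <= c r + #copies; averaging this over all r x r subgrids of
   [n] x [n], with r of order n^2 / |S|, gives the supersaturation bound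
   |S|^(2k-1) <= D #copies n^(2k-2), so a set with at most m copies has
   O(n + (m n^(2k-2))^(1/(2k-1))) points.  Merging rows and columns in pairs
   sends a set with at most m copies to one on [n/2] x [n/2] with at most m
   copies, and each merged point has at most 2^4 preimages; hence
   F(n) <= F(n/2) exp(O(n + (m n^(2k-2))^(1/(2k-1)))), and the geometric decay
   of both terms under halving sums this to the claim. *)

From HB Require Import structures.
From mathcomp Require Import all_boot all_order all_algebra all_fingroup.
From mathcomp Require Import all_classical all_reals all_analysis.
From mathcomp Require Import zify ring lra.
(* Re-imported so that the finset names (subsetP, setT, subsetT, ...) shadow
   those of classical_sets. *)
From mathcomp Require Import fintype finset.
Set Implicit Arguments. Unset Strict Implicit. Unset Printing Implicit Defensive.

Lemma leq_card_inj_lt (T : finType) (A : {pred T}) (f : T -> nat) t :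
  {in A &, injective f} -> {in A, forall x, f x < t} -> #|A| <= t.
Proof.
move=> finj fb; rewrite cardE -(size_map f) -[t in _ <= t](size_iota 0).
apply: uniq_leq_size => [|z /mapP[x]].
  by rewrite map_inj_in_uniq ?enum_uniq // => x y; rewrite !mem_enum; apply: finj.
by rewrite mem_enum => /fb xt ->; rewrite mem_iota.
Qed.

Lemma sum_nat_of_bool_card (T : finType) (A : {set T}) (P : pred T) :
  \sum_(q in A) (P q : nat) = #|[set q in A | P q]|.
Proof. by rewrite -sum1dep_card big_mkcondr; apply: eq_bigr => q _; case: (P q). Qed.

Definition contract_set N N' (gr gc : 'I_N -> 'I_N') (S : {set 'I_N * 'I_N}) :
  {set 'I_N' * 'I_N'} := [set (gr p.1, gc p.2) | p in S].

Section Copies.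
Variables (k : nat) (pi : 'S_k).

Definition copy_in N (S : {set 'I_N * 'I_N})
    (xy : {ffun 'I_k -> 'I_N} * {ffun 'I_k -> 'I_N}) : bool :=
  [&& incr_idx xy.1, incr_idx xy.2 & [forall i, (xy.1 i, xy.2 (pi i)) \in S]].

Definition copies_in N (S : {set 'I_N * 'I_N}) : nat := #|[set xy | copy_in S xy]|.

Lemma incr_idxP N (x : {ffun 'I_k -> 'I_N}) :
  reflect (forall i j : 'I_k, i < j -> x i < x j) (incr_idx x).
Proof.
apply: (iffP forallP) => [h i j|h i]; first by move/forallP/(_ j)/implyP: (h i).
by apply/forallP=> j; apply/implyP; apply: h.
Qed.

Lemma incr_idx_inj N (x : {ffun 'I_k -> 'I_N}) : incr_idx x -> injective x.
Proof.
move/incr_idxP=> hx i j e.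
by case: (ltngtP i j) => [/hx|/hx|/val_inj //]; rewrite e ltnn.
Qed.

Lemma copies_in_eq0_no_copy N (S : {set 'I_N * 'I_N}) xy :
  copies_in S = 0 -> ~~ copy_in S xy.
Proof.
move/eqP; rewrite cards_eq0 => /eqP e.
apply/negP=> h; have : xy \in [set xy | copy_in S xy] by rewrite inE.
by rewrite e inE.
Qed.

Lemma copies_in_contract_set N N' (gr gc : 'I_N -> 'I_N')
    (hr : {homo gr : x y / x <= y}) (hc : {homo gc : x y / x <= y})
    (S : {set 'I_N * 'I_N}) :
  copies_in (contract_set gr gc S) <= copies_in S.
Proof.
have mono_lt (g : 'I_N -> 'I_N') (hg : {homo g : x y / x <= y}) (x y : 'I_N) :
    g x < g y -> x < y by rewrite !ltnNge; apply: contra => /hg.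
pose g (xy : {ffun 'I_k -> 'I_N} * {ffun 'I_k -> 'I_N}) :=
  ([ffun i => gr (xy.1 i)], [ffun j => gc (xy.2 j)]).
apply: (leq_trans _ (leq_imset_card g _)); apply: subset_leq_card.
apply/subsetP=> -[a b]; rewrite inE => /and3P[/incr_idxP ha /incr_idxP hb /forallP hab].
have /fin_all_exists[P hP] : forall i, exists p : 'I_N * 'I_N,
    p \in S /\ (gr p.1, gc p.2) = (a i, b (pi i)).
  by move=> i; case/imsetP: (hab i) => p pS e; exists p.
pose x := [ffun i => (P i).1]; pose y := [ffun j => (P ((pi^-1)%g j)).2].
apply/imsetP; exists (x, y).
  rewrite inE; apply/and3P; split.
  - apply/incr_idxP=> i j lij; rewrite !ffunE; apply: (mono_lt _ hr).
    by case: (hP i) (hP j) => _ [-> _] [_ [-> _]]; apply: ha.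
  - apply/incr_idxP=> i j lij; rewrite !ffunE; apply: (mono_lt _ hc).
    case: (hP (pi^-1 i)%g) (hP (pi^-1 j)%g) => _ [_ ->] [_ [_ ->]].
    by rewrite !permKV; apply: hb.
  - by apply/forallP=> i; rewrite !ffunE permK -surjective_pairing; case: (hP i).
congr pair; apply/ffunP=> i; rewrite !ffunE; first by case: (hP i) => _ [->].
by case: (hP (pi^-1 i)%g) => _ [_ ->]; rewrite permKV.
Qed.

End Copies.

Lemma copies_in_transpose_eq0 k (pi : 'S_k) N (S : {set 'I_N * 'I_N}) :
  copies_in pi S = 0 -> copies_in (pi^-1)%g [set (p.2, p.1) | p in S] = 0.
Proof.
move=> free; apply/eqP; rewrite cards_eq0; apply/eqP/setP=> -[x y]; rewrite !inE.
apply/negP=> /and3P[hx hy /forallP hxy]; apply: (negP (copies_in_eq0_no_copy (y, x) free)).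
apply/and3P; split=> //; apply/forallP=> i.
by move: (hxy (pi i)); rewrite permK => /imsetP[[p1 p2] pS [-> ->]].
Qed.

Lemma exists_incr_idx_in k N (X : {set 'I_N}) : k <= #|X| ->
  exists2 f : {ffun 'I_k -> 'I_N}, incr_idx f & forall i, f i \in X.
Proof.
move=> hk.
have sortedX : sorted ltn (map val (enum X)).
  rewrite -[enum _](eq_filter (mem_enum _)) -(eq_filter (mem_map val_inj _)).
  by rewrite -filter_map (sorted_filter ltn_trans) // unlock val_ord_enum iota_ltn_sorted.
pose o (i : 'I_k) : 'I_#|X| := Ordinal (leq_trans (ltn_ord i) hk).
exists [ffun i => enum_val (o i)]; last by move=> i; rewrite ffunE enum_valP.
apply/incr_idxP=> i j lij; rewrite !ffunE.
have x0 := enum_val (o i); have sizeX : size (enum X) = #|X| by rewrite cardE.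
rewrite !(enum_val_nth x0) -!(nth_map x0 0 val) ?sizeX //.
by apply: (sorted_ltn_nth ltn_trans 0 sortedX); rewrite ?inE ?size_map ?sizeX.
Qed.

Section BlockPartition.
Variables (N K : nat) (R : {set 'I_N}).
Hypothesis K_gt0 : 0 < K.

Definition rank_in (x : 'I_N) : nat := #|[set y in R | y < x]|.

Lemma rank_in_le x : rank_in x <= x.
Proof.
apply: (@leq_card_inj_lt _ _ val) => [y z _ _ /val_inj //|y].
by rewrite inE => /andP[].
Qed.

Lemma rank_in_homo (x y : 'I_N) : x <= y -> rank_in x <= rank_in y.
Proof.
move=> xy; apply/subset_leq_card/subsetP=> z; rewrite !inE => /andP[-> /=].
by move/leq_trans; apply.
Qed.

Lemma rank_in_lt (x y : 'I_N) : x \in R -> x < y -> rank_in x < rank_in y.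
Proof.
move=> xR xy; apply: proper_card; rewrite properE; apply/andP; split.
  by apply/subsetP=> z; rewrite !inE => /andP[-> /= /ltn_trans]; apply.
by apply/subsetPn; exists x; rewrite !inE ?xR ?xy ?ltnn.
Qed.

Lemma rank_in_bound x : x \in R -> rank_in x < #|R|.
Proof.
move=> xR; apply: proper_card; rewrite properE; apply/andP; split.
  by apply/subsetP=> z; rewrite !inE => /andP[].
by apply/subsetPn; exists x => //; rewrite !inE ltnn andbF.
Qed.

Lemma block_of_subproof x : rank_in x %/ K < N.
Proof. exact: leq_ltn_trans (leq_div _ _) (leq_ltn_trans (rank_in_le x) (ltn_ord x)). Qed.

(* The elements of R, in increasing order, are cut into consecutive runs of
   K; [block_of x] is the index of the run of x. *)
Definition block_of (x : 'I_N) : 'I_N := Ordinal (block_of_subproof x).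

Lemma block_of_lt n x : x \in R -> #|R| <= n -> block_of x < (n.-1 %/ K).+1.
Proof.
move=> xR Rn; rewrite /= ltnS leq_div2r //.
by have := rank_in_bound xR; lia.
Qed.

Lemma card_block_of_image n : #|R| <= n -> #|block_of @: R| <= (n.-1 %/ K).+1.
Proof.
move=> Rn; apply: (@leq_card_inj_lt _ _ val) => [x y _ _ /val_inj //|i /imsetP[x xR ->]].
exact: block_of_lt.
Qed.

Lemma block_of_homo : {homo block_of : x y / x <= y}.
Proof. by move=> x y xy; rewrite /= leq_div2r // rank_in_homo. Qed.

Lemma card_block_of_fiber (a : nat) : #|[set x in R | block_of x == a :> nat]| <= K.
Proof.
apply: (@leq_card_inj_lt _ _ (fun x => rank_in x %% K)) => [x y|x _]; last by rewrite ltn_mod.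
rewrite !inE => /andP[xR /eqP ea] /andP[yR /eqP eb] e.
have {}e : rank_in x = rank_in y.
  by rewrite (divn_eq (rank_in x) K) (divn_eq (rank_in y) K) e; move: ea eb => /= -> ->.
case: (ltngtP x y) => [/(rank_in_lt xR)|/(rank_in_lt yR)|/val_inj //]; by rewrite e ltnn.
Qed.

End BlockPartition.

Section WideBlocks.
Variables (k : nat) (pi : 'S_k) (N K : nat) (S : {set 'I_N * 'I_N}).
Variables (gr gc : 'I_N -> 'I_N) (C : {set 'I_N}).
Hypothesis k_gt0 : 0 < k.
Hypothesis gr_homo : {homo gr : x y / x <= y}.
Hypothesis S_cols : forall p, p \in S -> p.2 \in C.
Hypothesis card_gc_fiber : forall b, #|[set y in C | gc y == b]| <= K.
Hypothesis S_free : copies_in pi S = 0.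

Definition block_set a b := [set p in S | (gr p.1 == a) && (gc p.2 == b)].
Definition block_cols a b := [set p.2 | p in block_set a b].

(* k blocks of one block column sharing k columns Y would contain a copy,
   read off from the columns Y in the order prescribed by pi. *)
Lemma card_blocks_sharing_cols b (Y : {set 'I_N}) :
  #|Y| = k -> #|[set a | Y \subset block_cols a b]| < k.
Proof.
move=> cardY; rewrite ltnNge; apply/negP=> /exists_incr_idx_in[a /incr_idxP a_incr aY].
have [y y_incr yY] := @exists_incr_idx_in k _ Y (eq_leq (esym cardY)).
have /fin_all_exists[P hP] : forall i, exists p : 'I_N * 'I_N,
    p \in block_set (a i) b /\ p.2 = y (pi i).
  move=> i; move: (aY i); rewrite inE => /subsetP/(_ _ (yY (pi i))).
  by case/imsetP=> p pb ->; exists p.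
apply: (negP (copies_in_eq0_no_copy ([ffun i => (P i).1], y) S_free)).
apply/and3P; split=> //.
  apply/incr_idxP=> i j lij; rewrite !ffunE ltnNge; apply/negP=> /gr_homo.
  move: (hP i) (hP j); rewrite !inE => -[/and3P[_ /eqP-> _] _] [/and3P[_ /eqP-> _] _].
  by rewrite leqNgt a_incr.
apply/forallP=> i; rewrite ffunE -(proj2 (hP i)) -surjective_pairing.
by case: (hP i); rewrite inE => /andP[pS _].
Qed.

Lemma card_wide_blocks_in_col b :
  #|[set a | k <= #|block_cols a b|]| <= (k - 1) * 2 ^ K.
Proof.
set W := [set a | _]; pose G := [set y in C | gc y == b].
have cols_sub a : block_cols a b \subset G.
  apply/subsetP=> y /imsetP[p]; rewrite inE => /and3P[pS _ /eqP gcp] ->.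
  by rewrite inE S_cols // gcp eqxx.
pose choice a := odflt set0 [pick Y : {set 'I_N} | (Y \subset block_cols a b) && (#|Y| == k)].
have choiceP a : a \in W -> (choice a \subset block_cols a b) /\ #|choice a| = k.
  rewrite inE /choice => /exists_incr_idx_in[f /incr_idx_inj f_inj f_in].
  case: pickP => [Y /andP[? /eqP ?] //|/(_ (f @: setT))].
  rewrite card_imset // cardsT card_ord eqxx andbT => /negP[].
  by apply/subsetP=> z /imsetP[i _ ->].
rewrite -sum1_card (partition_big_imset choice) /=.
apply: (@leq_trans (\sum_(Y in choice @: W) (k - 1))).
  apply: leq_sum => Y /imsetP[a aW ->]; rewrite sum1dep_card -ltnS subn1 prednK //.
  have [sub cardY] := choiceP a aW.
  apply: leq_ltn_trans (card_blocks_sharing_cols b cardY); apply: subset_leq_card.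
  apply/subsetP=> a'; rewrite !inE => /andP[wide /eqP <-].
  by case: (choiceP a'); rewrite ?inE.
rewrite sum_nat_const mulnC leq_mul2l; apply/orP; right.
have choices_sub : choice @: W \subset powerset G.
  apply/subsetP=> Y /imsetP[a aW ->]; rewrite powersetE.
  by case: (choiceP a aW) => sub _; apply: subset_trans sub (cols_sub a).
apply: leq_trans (subset_leq_card choices_sub) _.
by rewrite card_powerset leq_pexp2l //; apply: card_gc_fiber.
Qed.

Lemma card_wide_blocks t : {in C, forall y, gc y < t} ->
  #|[set q : 'I_N * 'I_N | k <= #|block_cols q.1 q.2|]| <= t * ((k - 1) * 2 ^ K).
Proof.
move=> gc_lt; set Q := [set q | _].
rewrite -sum1_card (partition_big_imset snd) /=.
apply: (@leq_trans (\sum_(b in snd @: Q) ((k - 1) * 2 ^ K))).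
  apply: leq_sum => b _; rewrite sum1dep_card.
  apply: leq_trans (card_wide_blocks_in_col b).
  apply: (leq_trans _ (leq_imset_card (fun a => (a, b)) _)); apply: subset_leq_card.
  apply/subsetP=> -[a b']; rewrite !inE /= => /andP[wide /eqP<-].
  by apply/imsetP; exists a; rewrite ?inE.
rewrite sum_nat_const leq_mul2r; apply/orP; right.
apply: (@leq_card_inj_lt _ _ val) => [x y _ _ /val_inj //|c /imsetP[q]].
rewrite inE => /(leq_trans k_gt0)/card_gt0P[z /imsetP[p]] + _ ->.
by rewrite inE => /and3P[pS _ /eqP <-]; apply/gc_lt/S_cols.
Qed.

End WideBlocks.

Definition mt_wide k := (k - 1) * 2 ^ (k * k).
Definition mt_const k := (k * k) ^ 2 * (2 * mt_wide k + 1).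

Lemma mt_const_step k n t s s' : 1 < k -> (k * k) ^ 2 <= n -> k * k * t <= n + k * k ->
  s' <= mt_const k * t -> s <= (k - 1) ^ 2 * s' + 2 * (k * k) ^ 2 * t * mt_wide k ->
  s <= mt_const k * n.
Proof.
move=> k_gt1 n_big tK s's ss'.
have tn : (k * k - 1) * t <= n.
  have : (k * k - 1) * (k * k * t) <= (k * k - 1) * (n + k * k) by rewrite leq_mul2l tK orbT.
  have : 4 <= k * k by nia.
  move: n_big; set K := k * k; nia.
set A := mt_const k; set W := mt_wide k.
have hA : (k - 1) ^ 2 * A + 2 * (k * k) ^ 2 * W <= (k * k - 1) * A.
  rewrite /A /mt_const -/W; nia.
apply: (leq_trans ss'); apply: leq_trans (_ : (k * k - 1) * A * t <= _).
  apply: leq_trans (_ : (k - 1) ^ 2 * (A * t) + 2 * (k * k) ^ 2 * W * t <= _).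
    by apply: leq_add; rewrite ?leq_mul2l ?s's ?orbT // mulnAC.
  by rewrite mulnA -mulnDl leq_mul2r hA orbT.
by rewrite mulnAC mulnC leq_mul2l tn orbT.
Qed.

Section MarcusTardosStep.
Variables (k : nat) (pi : 'S_k) (N n : nat).
Variables (R C : {set 'I_N}) (S : {set 'I_N * 'I_N}).
Hypothesis k_gt0 : 0 < k.
Hypothesis S_sub : S \subset setX R C.
Hypotheses (card_R : #|R| <= n) (card_C : #|C| <= n).
Hypothesis S_free : copies_in pi S = 0.

Local Notation gr := (block_of (k * k) R).
Local Notation gc := (block_of (k * k) C).
Local Notation t := (n.-1 %/ (k * k)).+1.
Local Notation St := [set (p.2, p.1) | p in S].

Let kk_gt0 : 0 < k * k. Proof. by rewrite muln_gt0 k_gt0. Qed.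

Lemma contract_set_sub : contract_set gr gc S \subset setX (gr @: R) (gc @: C).
Proof.
apply/subsetP=> _ /imsetP[p /(subsetP S_sub) pRC ->].
by move: pRC; rewrite [p \in _]inE => /andP[p1 p2]; rewrite inE /= !imset_f.
Qed.

Lemma contract_set_free : copies_in pi (contract_set gr gc S) = 0.
Proof. by apply/eqP; rewrite -leqn0 -S_free copies_in_contract_set //; apply: block_of_homo. Qed.

Lemma block_rows_transpose a b :
  [set p.1 | p in block_set S gr gc a b] = block_cols St gc gr b a.
Proof.
apply/setP=> x; apply/imsetP/imsetP => [[p]|[p]].
  rewrite inE => /andP[pS hp] ->; exists (p.2, p.1) => //.
  by rewrite inE imset_f //= andbC.
rewrite inE => /andP[/imsetP[q qS ->] hq] ->; exists q => //.
by move: hq; rewrite inE qS /= andbC.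
Qed.

Lemma card_block_set a b : #|block_set S gr gc a b| <= (k - 1) ^ 2 +
  (k * k) ^ 2 * (k <= #|block_cols S gr gc a b|) + (k * k) ^ 2 * (k <= #|block_cols St gc gr b a|).
Proof.
have sub : block_set S gr gc a b \subset
    setX [set p.1 | p in block_set S gr gc a b] (block_cols S gr gc a b).
  by apply/subsetP=> p pb; rewrite inE !imset_f.
apply: (leq_trans (subset_leq_card sub)); rewrite cardsX block_rows_transpose.
have rows_le : #|block_cols St gc gr b a| <= k * k.
  rewrite -block_rows_transpose; apply: leq_trans (card_block_of_fiber R kk_gt0 a).
  apply/subset_leq_card/subsetP=> _ /imsetP[p /[!inE] /and3P[pS /eqP ga _] ->].
  by rewrite ga eqxx andbT; move: (subsetP S_sub p pS); rewrite inE => /andP[].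
have cols_le : #|block_cols S gr gc a b| <= k * k.
  apply: leq_trans (card_block_of_fiber C kk_gt0 b).
  apply/subset_leq_card/subsetP=> _ /imsetP[p /[!inE] /and3P[pS _ /eqP gb] ->].
  by rewrite gb eqxx andbT; move: (subsetP S_sub p pS); rewrite inE => /andP[].
have := leq_mul rows_le cols_le.
have [wide_c|narrow_c] := leqP k #|block_cols S gr gc a b|;
  have [wide_r|narrow_r] := leqP k #|block_cols St gc gr b a|; rewrite /=; try nia.
by rewrite !muln0 !addn0 expnS expn1 => _; apply: leq_mul; rewrite subn1 -ltnS prednK.
Qed.

Lemma card_le_contract_set :
  #|S| <= (k - 1) ^ 2 * #|contract_set gr gc S| + 2 * (k * k) ^ 2 * t * mt_wide k.
Proof.
set S' := contract_set gr gc S.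
have S_cols p : p \in S -> p.2 \in C by move/(subsetP S_sub); rewrite inE => /andP[].
have St_cols p : p \in St -> p.2 \in R.
  by case/imsetP=> q /(subsetP S_sub); rewrite inE => /andP[? _] ->.
have wide_cols := card_wide_blocks k_gt0 (block_of_homo (k * k) R) S_cols
  (card_block_of_fiber C kk_gt0) S_free (fun y yC => block_of_lt kk_gt0 yC card_C).
have wide_rows := card_wide_blocks k_gt0 (block_of_homo (k * k) C) St_cols
  (card_block_of_fiber R kk_gt0) (copies_in_transpose_eq0 S_free)
  (fun y yR => block_of_lt kk_gt0 yR card_R).
have -> : #|S| = \sum_(q in S') #|block_set S gr gc q.1 q.2|.
  rewrite -sum1_card (partition_big_imset (fun p => (gr p.1, gc p.2))) /=.
  apply: eq_bigr => -[a b] _; rewrite sum1dep_card; apply: eq_card => p.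
  by rewrite !inE xpair_eqE.
apply: (@leq_trans (\sum_(q in S') ((k - 1) ^ 2 +
    (k * k) ^ 2 * (k <= #|block_cols S gr gc q.1 q.2|) +
    (k * k) ^ 2 * (k <= #|block_cols St gc gr q.2 q.1|)))).
  by apply: leq_sum => q _; apply: card_block_set.
rewrite !big_split /= sum_nat_const mulnC -!addnA leq_add2l -!big_distrr /=.
rewrite !sum_nat_of_bool_card.
have -> : 2 * (k * k) ^ 2 * t * mt_wide k =
    (k * k) ^ 2 * (t * mt_wide k) + (k * k) ^ 2 * (t * mt_wide k).
  by rewrite addnn -mul2n !mulnA.
apply: leq_add; rewrite leq_mul2l; apply/orP; right.
  apply: leq_trans wide_cols; apply/subset_leq_card/subsetP=> q.
  by rewrite !inE => /andP[].
apply: leq_trans wide_rows.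
rewrite -(card_imset _ (@inv_inj _ (fun q : 'I_N * 'I_N => (q.2, q.1)) _)); last by case.
by apply/subset_leq_card/subsetP=> _ /imsetP[q /[!inE] /andP[_ wide] ->].
Qed.

End MarcusTardosStep.

(* Merging runs of k^2 consecutive rows and columns gives a pi-free set on about
   n / k^2 lines.  A block meeting fewer than k rows and fewer than k columns
   holds at most (k-1)^2 points, and the other blocks are few in each block row
   and column, so f(n) <= (k-1)^2 f(n / k^2) + O(n). *)
Theorem marcus_tardos k (pi : 'S_k) n N (R C : {set 'I_N}) (S : {set 'I_N * 'I_N}) :
  1 < k -> S \subset setX R C -> #|R| <= n -> #|C| <= n -> copies_in pi S = 0 ->
  #|S| <= mt_const k * n.
Proof.
move=> k_gt1; have k_gt0 := ltnW k_gt1; have kk_gt0 : 0 < k * k by rewrite muln_gt0 k_gt0.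
elim/ltn_ind: n N R C S => n IH N R C S S_sub card_R card_C S_free.
have [small|big] := ltnP n ((k * k) ^ 2).
  apply: leq_trans (subset_leq_card S_sub) _; rewrite cardsX.
  apply: leq_trans (leq_mul card_R card_C) _; rewrite leq_mul2r /mt_const.
  by rewrite (leq_trans (ltnW small)) ?leq_pmulr ?addn1 ?orbT.
have tK : k * k * (n.-1 %/ (k * k)).+1 <= n + k * k.
  by rewrite mulnS addnC leq_add2r mulnC (leq_trans (leq_divM _ _)) ?leq_pred.
have t_lt_n : (n.-1 %/ (k * k)).+1 < n.
  have : 4 <= k * k by nia.
  by move: tK big; set K := k * k; nia.
apply: (mt_const_step k_gt1 big tK _ (card_le_contract_set k_gt0 S_sub card_R card_C S_free)).
apply: IH t_lt_n _ _ _ _ (contract_set_sub k S_sub) _ _ (contract_set_free R C S_free).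
  exact: card_block_of_image.
exact: card_block_of_image.
Qed.

Section Supersaturation.
Variables (k : nat) (pi : 'S_k).
Hypothesis k_gt1 : 1 < k.

Lemma card_le_mt_copies N (R C : {set 'I_N}) (S : {set 'I_N * 'I_N}) r :
  S \subset setX R C -> #|R| <= r -> #|C| <= r -> #|S| <= mt_const k * r + copies_in pi S.
Proof.
move=> S_sub card_R card_C; have k_gt0 := ltnW k_gt1; pose i0 : 'I_k := Ordinal k_gt0.
pose first_pt (xy : {ffun 'I_k -> 'I_N} * {ffun 'I_k -> 'I_N}) := (xy.1 i0, xy.2 (pi i0)).
set D := first_pt @: [set xy | copy_in pi S xy].
have free : copies_in pi (S :\: D) = 0.
  apply/eqP; rewrite cards_eq0; apply/eqP/setP=> xy; rewrite !inE.
  apply/negP=> /and3P[h1 h2 /forallP h3].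
  have xyS : copy_in pi S xy.
    by apply/and3P; split=> //; apply/forallP=> i; have /setDP[] := h3 i.
  by have /setDP[_] := h3 i0; rewrite imset_f ?inE.
have S_split : S = (S :\: D) :|: (S :&: D) by rewrite setDE -setIUr setUC setUCr setIT.
rewrite {1}S_split.
apply: leq_trans (leq_card_setU _ _).1 _; apply: leq_add.
  exact: marcus_tardos k_gt1 (subset_trans (subsetDl S D) S_sub) card_R card_C free.
by apply: leq_trans (subset_leq_card (subsetIr S D)) _; apply: leq_imset_card.
Qed.

Variable n : nat.

Definition draws r := [set X : {set 'I_n} | #|X| == r].

Lemma card_draws_superset r (X : {set 'I_n}) : #|X| <= r ->
  #|[set Y in draws r | X \subset Y]| = 'C(n - #|X|, r - #|X|).
Proof.
move=> card_X.
have cardCX : #|~: X| = n - #|X| by have := cardsC X; rewrite card_ord; lia.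
rewrite -cardCX -cards_draws -(@card_in_imset _ _ (fun Y => Y :\: X)); last first.
  move=> Y1 Y2; rewrite !inE => /andP[_ XY1] /andP[_ XY2] /setP e; apply/setP=> z.
  move: (e z); rewrite !inE; case: (boolP (z \in X)) => [zX _|_ //].
  by rewrite (subsetP XY1 z zX) (subsetP XY2 z zX).
apply: eq_card => Z; rewrite !inE; apply/imsetP/andP => [[Y]|[ZX /eqP cardZ]].
  rewrite !inE => /andP[/eqP cardY XY] ->; split; first by rewrite setDE subsetIr.
  by rewrite cardsDS // cardY.
have disjZX : [disjoint Z & X] by rewrite -[X]setCK -subsets_disjoint.
exists (Z :|: X); last by rewrite setDUl setDv setU0; apply/esym/setDidPl.
move: disjZX; rewrite -setI_eq0 => /eqP disjZX.
by rewrite !inE subsetUr andbT cardsU disjZX cards0 subn0 cardZ subnK.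
Qed.

Lemma sum_draws2_card (I : finType) (P : {set I}) (fx fy : I -> {set 'I_n}) j r :
  j <= r -> (forall i, i \in P -> #|fx i| = j /\ #|fy i| = j) ->
  \sum_(X in draws r) \sum_(Y in draws r)
    #|[set i in P | (fx i \subset X) && (fy i \subset Y)]| = #|P| * 'C(n - j, r - j) ^ 2.
Proof.
move=> jr cardP.
have cardE X Y : #|[set i in P | (fx i \subset X) && (fy i \subset Y)]| =
    \sum_(i in P) (fx i \subset X : nat) * (fy i \subset Y : nat).
  rewrite -sum_nat_of_bool_card; apply: eq_bigr => i _.
  by case: (fx i \subset X); case: (fy i \subset Y).
under eq_bigr do under eq_bigr do rewrite cardE.
under eq_bigr do rewrite exchange_big /=.
rewrite exchange_big /= -sum_nat_const; apply: eq_bigr => i /cardP[cardx cardy].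
by rewrite -big_distrlr /= !sum_nat_of_bool_card !card_draws_superset ?cardx ?cardy // mulnn.
Qed.

Lemma copy_in_setIX (S : {set 'I_n * 'I_n}) (X Y : {set 'I_n}) xy :
  copy_in pi (S :&: setX X Y) xy =
  copy_in pi S xy && ((xy.1 @: setT \subset X) && (xy.2 @: setT \subset Y)).
Proof.
case: xy => x y; rewrite /copy_in /=; case: (incr_idx x) (incr_idx y) => [] [] //=.
apply/forallP/andP => [h|[/forallP h /andP[hX hY]] i].
  split; first by apply/forallP=> i; have /setIP[] := h i.
  apply/andP; split; apply/subsetP=> _ /imsetP[i _ ->].
    by have /setIP[_ /setXP[]] := h i.
  by have /setIP[_ /setXP[]] := h (pi^-1 i)%g; rewrite permKV.
rewrite inE h inE /=; apply/andP; split; [apply: (subsetP hX) | apply: (subsetP hY)].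
  by apply/imsetP; exists i; rewrite ?inE.
by apply/imsetP; exists (pi i); rewrite ?inE.
Qed.

(* Averaging the removal bound over all r x r submatrices: a point lies in
   C(n-1, r-1)^2 of them, a copy of pi in C(n-k, r-k)^2. *)
Lemma averaged_removal r (S : {set 'I_n * 'I_n}) : k <= r -> r <= n ->
  #|S| * 'C(n - 1, r - 1) ^ 2 <=
  'C(n, r) ^ 2 * (mt_const k * r) + copies_in pi S * 'C(n - k, r - k) ^ 2.
Proof.
move=> kr rn; have r_gt0 : 0 < r by apply: leq_trans kr; apply: ltnW.
have -> : #|S| * 'C(n - 1, r - 1) ^ 2 =
    \sum_(X in draws r) \sum_(Y in draws r) #|S :&: setX X Y|.
  rewrite -(@sum_draws2_card _ S (fun p => [set p.1]) (fun p => [set p.2]) 1 r) //.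
    apply: eq_bigr => X _; apply: eq_bigr => Y _; apply: eq_card => p.
    by rewrite !inE !sub1set.
  by move=> p _; rewrite !cards1.
have -> : copies_in pi S * 'C(n - k, r - k) ^ 2 =
    \sum_(X in draws r) \sum_(Y in draws r) copies_in pi (S :&: setX X Y).
  rewrite -(@sum_draws2_card _ [set xy | copy_in pi S xy]
    (fun xy => xy.1 @: setT) (fun xy => xy.2 @: setT) k r) //.
    apply: eq_bigr => X _; apply: eq_bigr => Y _; apply: eq_card => xy.
    by rewrite !inE copy_in_setIX.
  move=> xy; rewrite inE => /and3P[x_incr y_incr _].
  by rewrite !card_imset ?cardsT ?card_ord //; apply: incr_idx_inj.
have -> : 'C(n, r) ^ 2 * (mt_const k * r) =
    \sum_(X in draws r) \sum_(Y in draws r) mt_const k * r.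
  by rewrite !sum_nat_const /draws card_draws card_ord !mulnA mulnn.
rewrite -big_split; apply: leq_sum => X /[!inE] /eqP cardX.
rewrite -big_split; apply: leq_sum => Y /[!inE] /eqP cardY.
by apply: card_le_mt_copies (subsetIr _ _) _ _; rewrite ?cardX ?cardY.
Qed.

End Supersaturation.

Lemma bin_sub_mul_le n r j : j <= r -> r <= n ->
  'C(n - j, r - j) * n ^ j <= 'C(n, r) * r ^ j.
Proof.
move=> + rn; elim: j => [|j IH] jr; first by rewrite !subn0.
have nj_gt0 : 0 < n - j by rewrite subn_gt0 (leq_trans jr).
have rec := mul_bin_diag (n - j) (r - j.+1).
rewrite -subnS -subSn // subSS in rec.
rewrite -(leq_pmul2l nj_gt0) !mulnA rec !expnS.
apply: (@leq_trans ((r - j) * n * ('C(n, r) * r ^ j))).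
  by rewrite -!mulnA leq_mul2l mulnCA leq_mul2l IH ?orbT // ltnW.
have -> : (n - j) * 'C(n, r) * (r * r ^ j) = (n - j) * r * ('C(n, r) * r ^ j) by ring.
by rewrite leq_mul2r; apply/orP; right; nia.
Qed.

Lemma leq_mt_const k : k <= mt_const k.
Proof.
rewrite /mt_const addn1 mulnS (leq_trans _ (leq_addr _ _)) //.
by case: k => // k; rewrite -mulnn -!mulnA leq_pmulr.
Qed.

Lemma exists_averaging_size k A n w :
  0 < A -> k <= A -> 0 < w -> 4 * A * n <= w -> w <= n * n ->
  exists r, [/\ k <= r, r <= n, 2 * A * (n * n) <= r * w & r * w <= 4 * A * (n * n)].
Proof.
move=> A_gt0 kA w_gt0 wAn wn.
pose r := (2 * A * (n * n) + w - 1) %/ w.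
have := divn_eq (2 * A * (n * n) + w - 1) w; have := ltn_pmod (2 * A * (n * n) + w - 1) w_gt0.
rewrite -/r; set rem := _ %% w => rem_lt rE.
have rw_ge : 2 * A * (n * n) <= r * w by lia.
have rw_le : r * w <= 2 * A * (n * n) + w by lia.
have nn_gt0 : 0 < n * n by apply: leq_trans wn.
exists r; split => //.
- have two_A_le : 2 * A <= r.
    by rewrite -(leq_pmul2r nn_gt0) (leq_trans rw_ge) // leq_mul2l wn orbT.
  by rewrite (leq_trans kA) // (leq_trans _ two_A_le) // leq_pmull.
- by rewrite leqNgt; apply/negP=> nr; have := leq_mul nr (leqnn w); nia.
- have : n * n <= A * (n * n) by rewrite leq_pmull.
  nia.
Qed.

Section SupersaturationBound.
Variables (k : nat) (pi : 'S_k).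
Hypothesis k_gt1 : 1 < k.

(* averaged_removal with the binomials cleared, using n C(n-1, r-1) = r C(n, r)
   and C(n-k, r-k) n^k <= C(n, r) r^k. *)
Lemma card_mul_le_copies n r (S : {set 'I_n * 'I_n}) : k <= r -> r <= n ->
  #|S| * r * n ^ (2 * k - 2) <= mt_const k * n ^ (2 * k) + copies_in pi S * r ^ (2 * k - 1).
Proof.
move=> kr rn; have r_gt0 : 0 < r by apply: leq_trans kr; apply: ltnW.
have avg := averaged_removal pi k_gt1 S kr rn.
set w := #|S| in avg *; set c := copies_in pi S in avg *; set A := mt_const k in avg *.
set B := 'C(n, r) in avg *; set b1 := 'C(n - 1, r - 1) in avg; set b2 := 'C(n - k, r - k) in avg.
have b1E : n * b1 = r * B.
  by rewrite /b1 /B; have := mul_bin_diag n (r - 1); rewrite !subn1 prednK.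
have b2_le : b2 * n ^ k <= B * r ^ k by apply: bin_sub_mul_le.
set p := 2 * k - 2.
have e2k : 2 * k = p + 2 by rewrite /p; lia.
have B_gt0 : 0 < B by rewrite bin_gt0.
rewrite -(@leq_pmul2l (B ^ 2 * r)) ?muln_gt0 ?expn_gt0 ?B_gt0 //.
have -> : B ^ 2 * r * (w * r * n ^ p) = w * b1 ^ 2 * n ^ (2 * k).
  have -> : w * b1 ^ 2 * n ^ (2 * k) = w * n ^ p * (n * b1) ^ 2 by rewrite e2k expnD; ring.
  by rewrite b1E; ring.
have -> : B ^ 2 * r * (A * n ^ (2 * k) + c * r ^ (2 * k - 1)) =
    B ^ 2 * (A * r) * n ^ (2 * k) + c * (B * r ^ k) ^ 2.
  have rE : (r ^ k) ^ 2 = r * r ^ (2 * k - 1).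
    by rewrite -expnS -expnM mulnC; congr (_ ^ _); lia.
  by rewrite expnMn rE; ring.
apply: leq_trans (leq_mul avg (leqnn _)) _.
have nE : n ^ (2 * k) = (n ^ k) ^ 2 by rewrite -expnM mulnC.
by rewrite mulnDl leq_add2l -mulnA leq_mul2l nE -expnMn leq_exp2r ?b2_le ?orbT.
Qed.

Lemma supersaturation n (S : {set 'I_n * 'I_n}) : 4 * mt_const k * n <= #|S| ->
  #|S| ^ (2 * k - 1) <= (4 * mt_const k) ^ (2 * k - 1) * copies_in pi S * n ^ (2 * k - 2).
Proof.
move=> big; set A := mt_const k; set w := #|S|; set c := copies_in pi S.
set p := 2 * k - 2; set q := 2 * k - 1.
have q_gt0 : 0 < q by rewrite /q; lia.
have [w0|w_gt0] := posnP w; first by rewrite w0 exp0n.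
have wn : w <= n * n by rewrite /w -[n in n * n]card_ord -card_prod max_card.
have A_gt0 : 0 < A by apply: leq_trans (ltnW k_gt1) (leq_mt_const k).
have [r [kr rn rw_ge rw_le]] := exists_averaging_size A_gt0 (leq_mt_const k) w_gt0 big wn.
have n2k : n ^ (2 * k) = n * n * n ^ p by rewrite mulnn -expnD; congr (_ ^ _); rewrite /p; lia.
have An_le : A * n ^ (2 * k) <= c * r ^ q.
  have := card_mul_le_copies S kr rn; rewrite -/w -/c -/A -/p -/q.
  have : 2 * A * n ^ (2 * k) <= w * r * n ^ p by rewrite n2k mulnA (mulnC w) leq_mul2r rw_ge orbT.
  lia.
have nq : (n * n) ^ q = n ^ (2 * k) * n ^ p.
  by rewrite mulnn -expnM -expnD; congr (_ ^ _); rewrite /p /q; lia.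
have : n ^ (2 * k) * (A * w ^ q) <= n ^ (2 * k) * ((4 * A) ^ q * c * n ^ p).
  rewrite mulnCA mulnA; apply: leq_trans (leq_mul An_le (leqnn _)) _.
  apply: leq_trans (_ : c * (4 * A * (n * n)) ^ q <= _).
    by rewrite -mulnA -expnMn leq_mul2l leq_exp2r ?rw_le ?orbT.
  by rewrite expnMn nq; apply: eq_leq; ring.
have n_gt0 : 0 < n.
  by rewrite lt0n; apply: contraTneq w_gt0 => n0; rewrite -leqNgt (leq_trans wn) // n0.
rewrite leq_pmul2l ?expn_gt0 ?n_gt0 //; apply: leq_trans.
by rewrite leq_pmull.
Qed.

End SupersaturationBound.

Definition few_copies k (pi : 'S_k) n m := [set S : {set 'I_n * 'I_n} | copies_in pi S <= m].

Lemma half_ord_subproof n (x : 'I_n) : x %/ 2 < n.+1 %/ 2.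
Proof. by have := ltn_ord x; lia. Qed.

Definition half_ord n (x : 'I_n) : 'I_(n.+1 %/ 2) := Ordinal (half_ord_subproof x).

Lemma half_ord_homo n : {homo @half_ord n : x y / x <= y}.
Proof. by move=> x y xy; rewrite /= leq_div2r. Qed.

Lemma card_half_ord_fiber n (a : 'I_(n.+1 %/ 2)) : #|[set x : 'I_n | half_ord x == a]| <= 2.
Proof.
apply: (@leq_card_inj_lt _ _ (fun x : 'I_n => x %% 2)) => [x y|x _]; last by rewrite ltn_mod.
rewrite !inE => /eqP/(congr1 val)/= ea /eqP/(congr1 val)/= eb e; apply: val_inj.
by rewrite /= (divn_eq x 2) (divn_eq y 2) e ea eb.
Qed.

(* Merging consecutive rows and columns in pairs keeps the number of copies
   at most m, and each point of the merged set comes from a 2 x 2 block of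
   the original one, which leaves at most 2 ^ 4 choices. *)
Lemma card_few_copies_halve k (pi : 'S_k) n m :
  #|few_copies pi n m| <= \sum_(S' in few_copies pi (n.+1 %/ 2) m) 2 ^ (4 * #|S'|).
Proof.
set n' := n.+1 %/ 2; pose merge := @contract_set n n' (@half_ord n) (@half_ord n).
rewrite -sum1_card (partition_big merge (mem (few_copies pi n' m))) /=; last first.
  move=> S; rewrite !inE => /(leq_trans _)-> //.
  by apply: copies_in_contract_set; apply: half_ord_homo.
apply: leq_sum => S' _; rewrite sum1dep_card.
pose merge_pt (p : 'I_n * 'I_n) := (half_ord p.1, half_ord p.2).
apply: (@leq_trans #|powerset [set p | merge_pt p \in S']|).
  apply/subset_leq_card/subsetP=> S; rewrite !inE => /andP[_ /eqP mergeS].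
  by apply/subsetP=> p pS; rewrite inE -mergeS imset_f.
rewrite card_powerset leq_pexp2l // -sum1_card (partition_big merge_pt (mem S')) /=; last first.
  by move=> p; rewrite inE.
rewrite (mulnC 4) -sum_nat_const; apply: leq_sum => q _; rewrite sum1dep_card.
apply: leq_trans (_ : #|setX [set x | half_ord x == q.1] [set x | half_ord x == q.2]| <= _).
  by apply/subset_leq_card/subsetP=> p; rewrite !inE => /andP[_ /eqP <-]; rewrite !eqxx.
by rewrite cardsX (leq_mul (card_half_ord_fiber q.1) (card_half_ord_fiber q.2)).
Qed.

Import Order.TTheory GRing.Theory Num.Theory.
Local Open Scope ring_scope.

Section RealBounds.
Variable R : realType.

Lemma powR_invn_exprn (a : R) q : 0 <= a -> (0 < q)%N -> (a `^ (q%:R)^-1) ^+ q = a.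
Proof.
move=> a_ge0 q_gt0; rewrite -powR_mulrn ?powR_ge0 // -powRrM mulVf ?powRr1 //.
by rewrite pnatr_eq0 -lt0n.
Qed.

Lemma expr2n_le_expR j : (2 : R) ^+ j <= expR j%:R.
Proof.
rewrite -[j%:R]mul1r expRM_natr; apply: lerXn2r; rewrite ?nnegrE ?expR_ge0 //.
by have := expR_ge1Dx (1 : R); rewrite (_ : 1 + 1 = 2).
Qed.

Lemma expr_3_4_le_9_10 j : (3 / 4 : R) ^+ j.+2 <= (9 / 10) ^+ j.+3.
Proof.
elim: j => [|j IH]; first by rewrite !exprS expr0; lra.
rewrite (exprS _ j.+2) (exprS _ j.+3).
by apply: ler_pM; rewrite ?exprn_ge0 //; lra.
Qed.

(* The induction step of few_copies_bound: the cost 4 (4 a n' + d h') of one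
   halving is paid for by the decrease from K (n + h) to K (n' + h'). *)
Lemma halving_step_absorbed (a d n n' h h' : R) :
  0 <= a -> 0 <= d -> 0 <= n -> 0 <= h -> 0 <= h' ->
  n' <= 3 / 4 * n -> h' <= 9 / 10 * h ->
  (48 * a + 36 * d + 1) * (n' + h') + 4 * (4 * a * n' + d * h') <=
  (48 * a + 36 * d + 1) * (n + h).
Proof.
move=> a0 d0 n0 h0 h'0 nn' hh'; set K := 48 * a + 36 * d + 1.
have K0 : 0 <= K by rewrite /K; lra.
have t1 : (K + 16 * a) * n' <= (K + 16 * a) * (3 / 4 * n) by apply: ler_wpM2l => //; lra.
have t2 : (K + 4 * d) * h' <= (K + 4 * d) * (9 / 10 * h) by apply: ler_wpM2l => //; lra.
have p1 : 0 <= a * n by apply: mulr_ge0.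
have p2 : 0 <= d * n by apply: mulr_ge0.
have p3 : 0 <= a * h by apply: mulr_ge0.
have p4 : 0 <= d * h by apply: mulr_ge0.
rewrite /K in t1 t2 *; lra.
Qed.

End RealBounds.

Section CountingBound.
Variables (R : realType) (k : nat) (pi : 'S_k).
Hypothesis k_gt1 : (1 < k)%N.

Local Notation q := (2 * k - 1)%N.
Local Notation A := (mt_const k).
Local Notation D := ((4 * mt_const k) ^ (2 * k - 1))%N.

Definition growth n m : R := powR (m%:R * n%:R ^+ (2 * k - 2)) (q%:R)^-1.

Let q_gt0 : (0 < q)%N. Proof. by rewrite subn_gt0; lia. Qed.

Lemma growth_ge0 n m : 0 <= growth n m. Proof. exact: powR_ge0. Qed.

Lemma growth_exprn n m : growth n m ^+ q = m%:R * n%:R ^+ (2 * k - 2).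
Proof. by rewrite powR_invn_exprn. Qed.

Lemma card_le_growth n m (S : {set 'I_n * 'I_n}) : (copies_in pi S <= m)%N ->
  #|S|%:R <= (4 * A * n)%:R + D%:R * growth n m.
Proof.
move=> Sm; have [big|small] := leqP (4 * A * n) #|S|; last first.
  by rewrite -[X in X <= _]addr0 lerD ?ler_nat ?mulr_ge0 ?growth_ge0 // ltnW.
rewrite -[X in X <= _]add0r; apply: lerD => //.
rewrite -(ler_pXn2r q_gt0) ?nnegrE ?mulr_ge0 ?growth_ge0 //.
rewrite exprMn growth_exprn -!natrX -!natrM ler_nat.
apply: leq_trans (supersaturation pi k_gt1 big) _.
rewrite mulnA leq_mul // leq_mul // -[X in (X <= _)%N]expn1 leq_pexp2l //.
by rewrite expn_gt0 muln_gt0 (leq_trans (ltnW k_gt1) (leq_mt_const k)).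
Qed.

Lemma growth_shrink n n' m : (4 * n' <= 3 * n)%N -> growth n' m <= 9 / 10 * growth n m.
Proof.
move=> nn'; rewrite -(ler_pXn2r q_gt0) ?nnegrE ?mulr_ge0 ?growth_ge0 //.
rewrite exprMn !growth_exprn mulrCA ler_wpM2l //.
have -> : (2 * k - 2 = (2 * k - 4).+2)%N by lia.
have -> : (q = (2 * k - 4).+3)%N by lia.
have n'n : n'%:R <= 3 / 4 * n%:R :> R.
  have : (4 * n')%:R <= (3 * n)%:R :> R by rewrite ler_nat.
  rewrite !natrM; lra.
apply: le_trans (_ : (3 / 4 * n%:R) ^+ (2 * k - 4).+2 <= _).
  by apply: lerXn2r; rewrite ?nnegrE //; lra.
by rewrite exprMn ler_wpM2r ?exprn_ge0 ?(expr_3_4_le_9_10 R).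
Qed.

Lemma card_few_copies_halve_expR n m :
  #|few_copies pi n m|%:R <= #|few_copies pi (n.+1 %/ 2) m|%:R *
    expR (4 * ((4 * A * (n.+1 %/ 2))%:R + D%:R * growth (n.+1 %/ 2) m)).
Proof.
apply: le_trans (_ : (\sum_(S' in few_copies pi (n.+1 %/ 2) m) 2 ^ (4 * #|S'|))%N%:R <= _).
  by rewrite ler_nat card_few_copies_halve.
rewrite natr_sum mulr_natl -sumr_const; apply: ler_sum => S' /[!inE] S'm.
rewrite natrX; apply: le_trans (expr2n_le_expR R _) _; rewrite ler_expR natrM ler_wpM2l //.
exact: card_le_growth.
Qed.

Lemma card_few_copies_small K n m : 1 <= K -> (n <= 1)%N ->
  #|few_copies pi n m|%:R <= expR (K * (n%:R + growth n m)).
Proof.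
move=> K_ge1 n_le1; have n_sq : (n * n = n)%N by case: n n_le1 => [|[|]].
apply: le_trans (_ : (2 ^ (n * n))%N%:R <= _).
  rewrite ler_nat; apply: (@leq_trans #|powerset (setT : {set 'I_n * 'I_n})|).
    by apply/subset_leq_card/subsetP=> S _; rewrite powersetE subsetT.
  by rewrite card_powerset cardsT card_prod card_ord.
rewrite n_sq natrX; apply: le_trans (expr2n_le_expR R _) _; rewrite ler_expR.
have := growth_ge0 n m; have : 0 <= n%:R :> R by []; nra.
Qed.

Lemma few_copies_bound : exists K : R, forall n m,
  #|few_copies pi n m|%:R <= expR (K * (n%:R + growth n m)).
Proof.
exists (48 * A%:R + 36 * D%:R + 1) => n; elim/ltn_ind: n => n IH m.
have [n_le1|n_gt1] := leqP n 1.
  by apply: card_few_copies_small => //; have := ler0n R A; have := ler0n R D; lra.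
set n' := (n.+1 %/ 2)%N.
have n'_lt : (n' < n)%N by rewrite /n'; lia.
have n'_le : (4 * n' <= 3 * n)%N by rewrite /n'; lia.
apply: le_trans (card_few_copies_halve_expR n m) _; rewrite -/n'.
apply: le_trans (ler_wpM2r (expR_ge0 _) (IH n' n'_lt m)) _; rewrite -expRD ler_expR natrM natrM.
apply: halving_step_absorbed; rewrite ?growth_ge0 ?growth_shrink //.
have : (4 * n')%:R <= (3 * n)%:R :> R by rewrite ler_nat.
by rewrite !natrM; lra.
Qed.

End CountingBound.

Definition support_set n (M : 'M[bool]_n) : {set 'I_n * 'I_n} := [set p | M p.1 p.2].

Lemma support_set_inj n : injective (@support_set n).
Proof.
move=> M1 M2 /setP eqM; apply/matrixP=> i j.
by move: (eqM (i, j)); rewrite !inE => /eqP; case: (M1 i j) (M2 i j) => [] [].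
Qed.

Lemma copies_support_set k (pi : 'S_k) n (M : 'M[bool]_n) :
  copies pi M = copies_in pi (support_set M).
Proof.
apply: eq_card => xy; rewrite !inE /is_copy /copy_in.
by congr [&& _, _ & _]; apply: eq_forallb => i; rewrite inE.
Qed.

Theorem proposition4p3 (R : realType) (k : nat) (hk : (1 < k)%N) (pi : 'S_k) :
  exists C : R, forall m n : nat,
    (#|[set M : 'M[bool]_n | (copies pi M <= m)%N]|%:R : R) <=
    expR (C * (n%:R + powR (m%:R * n%:R ^+ (2 * k - 2)) ((2 * k - 1)%:R)^-1)).
Proof.
have [C boundC] := few_copies_bound R pi hk.
exists C => m n; apply: le_trans (boundC n m); rewrite ler_nat.
rewrite -(card_imset _ (@support_set_inj n)); apply/subset_leq_card/subsetP=> S /imsetP[M].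
by rewrite !inE copies_support_set => Mm ->.
Qed.
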